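(* For any instance of CAP with $m$ items, let $k$ be the maximum utilitarian social welfare $\sum_{i\in N}v_i(A_i)$ over all contiguous allocations $\mathbf A$. Then $k\ge\sqrt m$.
   Context: An instance of CAP consists of agents $N=[n]$ and indivisible items $M=\{g_1,\dots,g_m\}$ arranged on a path in index order; each agent $i$ has an additive valuation $v_i:2^M\to\mathbb{Z}_{\ge0}$ (nonnegative integer values), and every item $g$ satisfies $v_i(\{g\})\ge1$ for some agent $i$. An allocation $(A_1,\dots,A_n)$ is a partition of $M$ into possibly empty bundles; it is contiguous if each nonempty $A_i$ is a set of consecutive items $\{g_k,\dots,g_\ell\}$ (no order on agents is imposed). *)

From HB Require Import structures.
From mathcomp Require Import all_boot all_order all_algebra.
Set Implicit Arguments. Unset Strict Implicit. Unset Printing Implicit Defensive.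
Import Order.TTheory GRing.Theory Num.Theory.

(* Agents are 'I_n, items g_1..g_m are 'I_m (in path order).
   An additive valuation of agent i is given by its values on single items:
   v i g = v_i({g}) : nat. *)

Definition value (n m : nat) (v : 'I_n -> 'I_m -> nat) (i : 'I_n) (S : {set 'I_m}) : nat :=
  \sum_(g in S) v i g.

(* An allocation (partition of M into n possibly empty bundles indexed by agents)
   is represented by the map sending each item to the agent receiving it. *)
Definition bundle (n m : nat) (A : {ffun 'I_m -> 'I_n}) (i : 'I_n) : {set 'I_m} :=
  [set g | A g == i].

Definition contiguous (n m : nat) (A : {ffun 'I_m -> 'I_n}) : bool :=
  [forall i : 'I_n, forall g1 : 'I_m, forall g2 : 'I_m, forall g : 'I_m,
     ((g1 \in bundle A i) && (g2 \in bundle A i) && (g1 <= g <= g2)%N)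
       ==> (g \in bundle A i)].

Definition welfare (n m : nat) (v : 'I_n -> 'I_m -> nat) (A : {ffun 'I_m -> 'I_n}) : nat :=
  \sum_(i : 'I_n) value v i (bundle A i).

Definition maxWelfare (n m : nat) (v : 'I_n -> 'I_m -> nat) : nat :=
  \max_(A : {ffun 'I_m -> 'I_n} | contiguous A) welfare v A.

From HB Require Import structures.
From mathcomp Require Import all_boot all_order all_algebra.
Set Implicit Arguments. Unset Strict Implicit. Unset Printing Implicit Defensive.
Import Order.TTheory GRing.Theory Num.Theory.

(* Fix for every item g an agent f g with v (f g) g >= 1, and let k be the
   optimal contiguous welfare.  Giving everything to one agent i is contiguous
   and earns at least the number of items with f g = i, so each fibre of f has
   at most k items.  Call g a first occurrence if no earlier item has the same
   f-value, and give every item to f h, where h is the last first occurrence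
   not after it: this allocation is contiguous because distinct first
   occurrences have distinct f-values, and it earns at least one per first
   occurrence, so f takes at most k values.  Hence m <= k * k. *)

Section Welfare.

Variables (n m : nat) (v : 'I_n -> 'I_m -> nat).

Lemma welfareE (A : {ffun 'I_m -> 'I_n}) :
  welfare v A = \sum_g v (A g) g.
Proof.
rewrite /welfare /value (partition_big A xpredT) //=.
apply: eq_bigr => i _; apply: eq_big => g; first by rewrite inE.
by rewrite inE => /eqP ->.
Qed.

Lemma welfare_le_maxWelfare (A : {ffun 'I_m -> 'I_n}) :
  contiguous A -> welfare v A <= maxWelfare v.
Proof. by move=> cA; apply: (@leq_bigmax_cond _ _ (welfare v) A). Qed.

Lemma card_le_welfare (A : {ffun 'I_m -> 'I_n}) (S : {set 'I_m}) :
  {in S, forall g, 0 < v (A g) g} -> #|S| <= welfare v A.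
Proof.
move=> posS; rewrite welfareE [X in _ <= X](bigID (mem S)) /= -sum1_card.
by apply: leq_trans (leq_addr _ _); apply: leq_sum.
Qed.

End Welfare.

Lemma contiguous_const (n m : nat) (i : 'I_n) :
  contiguous [ffun _ : 'I_m => i].
Proof.
apply/forallP=> j; apply/forallP=> g1; apply/forallP=> g2; apply/forallP=> g.
by apply/implyP; rewrite /bundle !inE !ffunE => /andP [/andP [] ].
Qed.

Lemma contiguous_comp (n m : nat) (F : 'I_m -> 'I_n) (h : 'I_m -> 'I_m) :
  {homo h : a b / a <= b} ->
  (forall a b, F (h a) = F (h b) -> h a = h b) ->
  contiguous [ffun g => F (h g)].
Proof.
move=> h_mono F_inj.
apply/forallP=> j; apply/forallP=> g1; apply/forallP=> g2; apply/forallP=> g.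
apply/implyP; rewrite /bundle !inE !ffunE.
move=> /andP [/andP [/eqP e1 /eqP e2] /andP [le1 le2]].
have h12 : h g1 = h g2 by apply: F_inj; rewrite e1 e2.
suff -> : h g = h g1 by rewrite e1.
by apply/val_inj/eqP; rewrite eqn_leq {1}h12 !h_mono.
Qed.

Lemma card_le_imset_mul (T I : finType) (f : T -> I) (A : {set T}) (k : nat) :
  (forall i, #|[set x | f x == i]| <= k) -> #|A| <= #|f @: A| * k.
Proof.
move=> fibre_le; rewrite -sum1_card (partition_big_imset f) -sum_nat_const.
apply: leq_sum => i _; apply: leq_trans (fibre_le i); rewrite sum1_card.
by apply/subset_leq_card/subsetP => x; rewrite !inE => /andP [].
Qed.

Section FirstOccurrences.

Variables (n m : nat) (f : 'I_m -> 'I_n).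

Definition first_occ (g : 'I_m) : 'I_m :=
  [arg min_(h < g | f h == f g) (h : nat)].

Lemma first_occP g :
  [/\ first_occ g <= g, f (first_occ g) = f g
    & forall h, f h = f g -> first_occ g <= h].
Proof.
rewrite /first_occ; case: arg_minnP => // h /eqP fh h_min.
by split=> // [|h' fh']; apply: h_min => //; apply/eqP.
Qed.

Lemma first_occ_eq a b : f a = f b -> first_occ a = first_occ b.
Proof.
move=> fab; have [_ fa mina] := first_occP a; have [_ fb minb] := first_occP b.
by apply/val_inj/eqP; rewrite eqn_leq mina ?minb ?fa ?fb.
Qed.

Lemma first_occ_idem g : first_occ (first_occ g) = first_occ g.
Proof. by apply: first_occ_eq; have [] := first_occP g. Qed.

Definition is_first (h : 'I_m) : bool := first_occ h == h.

(* The witness [first_occ g] makes the argmax below well defined for every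
   item, without assuming that the path is nonempty. *)
Definition leader (g : 'I_m) : 'I_m :=
  [arg max_(h > first_occ g | (h <= g) && is_first h) (h : nat)].

Lemma leaderP g :
  [/\ leader g <= g, is_first (leader g)
    & forall h : 'I_m, h <= g -> is_first h -> h <= leader g].
Proof.
rewrite /leader; case: arg_maxnP => [|h /andP [hg fst] h_max].
  by have [le _ _] := first_occP g; rewrite le /is_first first_occ_idem eqxx.
by split=> // h' h'g fst'; apply: h_max; rewrite h'g.
Qed.

Lemma leader_mono : {homo leader : a b / a <= b}.
Proof.
move=> a b le_ab; have [la fa _] := leaderP a; have [_ _ maxb] := leaderP b.
by apply: maxb fa; apply: leq_trans la le_ab.
Qed.

Lemma leader_first h : is_first h -> leader h = h.
Proof.
move=> fst; have [le _ maxh] := leaderP h.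
by apply/val_inj/eqP; rewrite eqn_leq le maxh.
Qed.

Lemma leader_inj a b : f (leader a) = f (leader b) -> leader a = leader b.
Proof.
move=> /first_occ_eq; have [_ /eqP -> _] := leaderP a.
by have [_ /eqP -> _] := leaderP b.
Qed.

Lemma image_sub_first : f @: [set: 'I_m] \subset f @: [set h | is_first h].
Proof.
apply/subsetP => _ /imsetP [g _ ->]; have [_ fg _] := first_occP g.
by apply/imsetP; exists (first_occ g); rewrite ?inE /is_first ?first_occ_idem.
Qed.

End FirstOccurrences.

Section ValuedSelection.

Variables (n m : nat) (v : 'I_n -> 'I_m -> nat) (f : 'I_m -> 'I_n).
Hypothesis f_pos : forall g, 0 < v (f g) g.

Lemma card_fibre_le_maxWelfare i : #|[set g | f g == i]| <= maxWelfare v.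
Proof.
apply: leq_trans (welfare_le_maxWelfare v (contiguous_const m i)).
by apply: card_le_welfare => g; rewrite inE ffunE => /eqP <-.
Qed.

Lemma card_image_le_maxWelfare : #|f @: [set: 'I_m]| <= maxWelfare v.
Proof.
pose A := [ffun g => f (leader f g)].
have cA : contiguous A.
  by apply: contiguous_comp; [apply: leader_mono | apply: leader_inj].
apply: leq_trans (welfare_le_maxWelfare v cA).
apply: leq_trans (subset_leq_card (image_sub_first f)) _.
apply: leq_trans (leq_imset_card _ _) _.
by apply: card_le_welfare => g; rewrite inE ffunE => /leader_first ->.
Qed.

Lemma card_le_maxWelfare_sq : m <= maxWelfare v * maxWelfare v.
Proof.
rewrite -[X in X <= _]card_ord -cardsT.
apply: leq_trans (card_le_imset_mul _ card_fibre_le_maxWelfare) _.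
by rewrite leq_mul2r card_image_le_maxWelfare orbT.
Qed.

End ValuedSelection.

Local Open Scope ring_scope.

Lemma sqrt_nat_le (R : rcfType) (m k : nat) :
  (m <= k * k)%N -> Num.sqrt (m%:R : R) <= k%:R.
Proof.
move=> le_mk; rewrite -(@ger0_norm _ (k%:R : R)) ?ler0n // -sqrtr_sqr.
by rewrite ler_wsqrtr // -natrX ler_nat expnS expn1.
Qed.

Theorem mainTheorem11 (n m : nat) (v : 'I_n -> 'I_m -> nat)
  (hv : forall g : 'I_m, exists i : 'I_n, (1 <= v i g)%N)
  (R : rcfType) :
  Num.sqrt (m%:R : R) <= (maxWelfare v)%:R.
Proof.
have [f f_pos] := fin_all_exists hv.
exact/sqrt_nat_le/card_le_maxWelfare_sq/f_pos.
Qed.
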